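(* Let $P$ be a continuous poset and $(T_\varepsilon)_{\varepsilon\ge0}$ a superlinear family of Scott-continuous translations on $P$ satisfying TR2. Then $d_a(M,\underline M)=0$ and $d_a(M,\overline M)=0$ for every persistence module $M$ over $P$. In particular $d_a(M,0)=0$ whenever $M$ is ephemeral.
   Context: Let $P$ be a poset (as a category, $p\to q$ iff $p\le q$). A subset is directed if nonempty and any two elements have an upper bound in it. $x\ll y$ means: for every directed $D$ whose supremum exists with $y\le\sup D$, some $d\in D$ satisfies $x\le d$. $P$ is continuous if for each $p$ the set $\{x:x\ll p\}$ is directed with supremum $p$. A map $f\colon P\to P$ is Scott-continuous if it is order-preserving and $f(\sup D)=\sup f(D)$ for every directed $D$ whose supremum exists. A translation is an order-preserving $T\colon P\to P$ with $p\le T(p)$ for all $p$. A family $(T_\varepsilon)_{\varepsilon\ge0}$ of translations is superlinear if $T_\varepsilon(T_\delta(p))\le T_{\varepsilon+\delta}(p)$ for all $p$ and $\varepsilon,\delta\ge0$. TR2: $x\ll T_\varepsilon(x)$ for all $x\in P$ and $\varepsilon>0$. $k$ is a commutative ring with unity; persistence modules are functors $M$ from $P$ to $k$-modules. For a translation $T$, $T^*M=M\circ T$, with natural morphism $M\to T^*M$ given by $M(p\le T(p))$. Persistence modules $M,N$ are $\varepsilon$-interleaved if there are morphisms $f\colon M\to T_\varepsilon^*N$, $g\colon N\to T_\varepsilon^*M$ with $T_\varepsilon^*(g)\circ f$ equal to the natural morphism $M\to T_\varepsilon^*T_\varepsilon^*M$ and $T_\varepsilon^*(f)\circ g$ equal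 to the natural morphism $N\to T_\varepsilon^*T_\varepsilon^*N$. $d_a(M,N)$ is the infimum of $\varepsilon\ge0$ for which $M,N$ are $\varepsilon$-interleaved ($\infty$ if none). $\underline M_p=\varprojlim_{x\gg p}M_x$, $\overline M_p=\varinjlim_{x\ll p}M_x$. $M$ is ephemeral if $M(p\le q)=0$ for all $p\ll q$. *)

From HB Require Import structures.
From mathcomp Require Import all_boot all_order all_algebra.
From mathcomp Require Import classical_sets boolp reals constructive_ereal ereal.
Set Implicit Arguments. Unset Strict Implicit. Unset Printing Implicit Defensive.
Import Order.TTheory GRing.Theory Num.Theory.
Local Open Scope classical_set_scope.
Local Open Scope ring_scope.

Section PosetDefs.
Context {d : Order.disp_t} {P : porderType d}.

Definition directed (D : set P) : Prop :=
  (exists x, D x) /\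
  (forall a b, D a -> D b -> exists c, D c /\ (a <= c)%O /\ (b <= c)%O).

Definition is_sup (D : set P) (s : P) : Prop :=
  (forall x, D x -> (x <= s)%O) /\
  (forall u, (forall x, D x -> (x <= u)%O) -> (s <= u)%O).

Definition waybelow (x y : P) : Prop :=
  forall (D : set P) (s : P), directed D -> is_sup D s -> (y <= s)%O ->
    exists2 z, D z & (x <= z)%O.

Definition continuous_poset : Prop :=
  forall p : P, directed [set x | waybelow x p] /\ is_sup [set x | waybelow x p] p.

Definition order_preserving (f : P -> P) : Prop :=
  forall p q, (p <= q)%O -> (f p <= f q)%O.

Definition scott_continuous (f : P -> P) : Prop :=
  order_preserving f /\
  forall (D : set P) (s : P), directed D -> is_sup D s -> is_sup (f @` D) (f s).

Definition translation (f : P -> P) : Prop :=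
  order_preserving f /\ forall p, (p <= f p)%O.

Definition superlinear {R : realType} (T : R -> P -> P) : Prop :=
  forall e δ : R, 0 <= e -> 0 <= δ -> forall p, (T e (T δ p) <= T (e + δ) p)%O.

Definition TR2 {R : realType} (T : R -> P -> P) : Prop :=
  forall (x : P) (e : R), 0 < e -> waybelow x (T e x).

End PosetDefs.
Arguments continuous_poset {d} P.

Section PMod.
Variable k : comPzRingType.

Definition lin (U V : lmodType k) (f : U -> V) : Prop :=
  forall (a : k) (x y : U), f (a *: x + y) = a *: f x + f y.

Variables (d : Order.disp_t) (P : porderType d).

Record pmod := PMod {
  pobj :> P -> lmodType k;
  pmor : forall p q : P, (p <= q)%O -> pobj p -> pobj q;
  pmor_lin : forall p q (h : (p <= q)%O), lin (pmor h);
  pmor_id : forall p (h : (p <= p)%O) x, pmor h x = x;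
  pmor_comp : forall p q r (h1 : (p <= q)%O) (h2 : (q <= r)%O) (h3 : (p <= r)%O) x,
      pmor h3 x = pmor h2 (pmor h1 x)
}.
Arguments pmor p0 {p q} h _ : rename.

Definition morph_to_pullback (T : P -> P) (M N : pmod)
    (f : forall p, M p -> N (T p)) : Prop :=
  (forall p, lin (f p)) /\
  (forall p q (h : (p <= q)%O) (h' : (T p <= T q)%O) x,
      f q (pmor M h x) = pmor N h' (f p x)).

Arguments morph_to_pullback T M N f : clear implicits.

Definition interleaved (T : P -> P) (M N : pmod) : Prop :=
  exists (f : forall p, M p -> N (T p)) (g : forall p, N p -> M (T p)),
    morph_to_pullback T M N f /\ morph_to_pullback T N M g /\
    (forall p (h : (p <= T (T p))%O) x, g (T p) (f p x) = pmor M h x) /\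
    (forall p (h : (p <= T (T p))%O) x, f (T p) (g p x) = pmor N h x).

Definition d_a {R : realType} (T : R -> P -> P) (M N : pmod) : \bar R :=
  ereal_inf [set e%:E | e in [set e : R | 0 <= e /\ interleaved (T e) M N]].

Definition ephemeral (M : pmod) : Prop :=
  forall p q (h : (p <= q)%O), waybelow p q -> forall x, pmor M h x = 0.

(* (L, pi) realises  L_p = lim_{x >> p} M_x  (with its induced structure maps) *)
Definition is_lower_lim (M L : pmod)
    (pi : forall p x, waybelow p x -> L p -> M x) : Prop :=
  (forall p x hx, lin (pi p x hx)) /\
  (forall p x y hx hy (h : (x <= y)%O) m, pmor M h (pi p x hx m) = pi p y hy m) /\
  (forall p q (h : (p <= q)%O) x hxp hxq m, pi p x hxp m = pi q x hxq (pmor L h m)) /\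
  (forall p (N : lmodType k) (g : forall x, waybelow p x -> N -> M x),
     (forall x hx, lin (g x hx)) ->
     (forall x y hx hy (h : (x <= y)%O) n, pmor M h (g x hx n) = g y hy n) ->
     exists u : N -> L p, lin u /\ (forall x hx n, pi p x hx (u n) = g x hx n) /\
       (forall v : N -> L p, lin v -> (forall x hx n, pi p x hx (v n) = g x hx n) ->
          forall n, v n = u n)).

(* (L, iota) realises  L_p = colim_{x << p} M_x  (with its induced structure maps) *)
Definition is_upper_colim (M L : pmod)
    (iota : forall p x, waybelow x p -> M x -> L p) : Prop :=
  (forall p x hx, lin (iota p x hx)) /\
  (forall p x y hx hy (h : (x <= y)%O) m, iota p y hy (pmor M h m) = iota p x hx m) /\
  (forall p q (h : (p <= q)%O) x hxp hxq m, pmor L h (iota p x hxp m) = iota q x hxq m) /\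
  (forall p (N : lmodType k) (g : forall x, waybelow x p -> M x -> N),
     (forall x hx, lin (g x hx)) ->
     (forall x y hx hy (h : (x <= y)%O) m, g y hy (pmor M h m) = g x hx m) ->
     exists u : L p -> N, lin u /\ (forall x hx m, u (iota p x hx m) = g x hx m) /\
       (forall v : L p -> N, lin v -> (forall x hx m, v (iota p x hx m) = g x hx m) ->
          forall l, v l = u l)).


Definition zero_pmod : pmod.
Proof.
by refine (@PMod (fun _ => 'rV[k]_0) (fun _ _ _ x => x) _ _ _).
Defined.

End PMod.
Arguments is_lower_lim {k d P} M L pi.
Arguments is_upper_colim {k d P} M L iota.
Arguments interleaved {k d P} T M N.
Arguments ephemeral {k d P} M.
Arguments d_a {k d P R} T M N.
Arguments zero_pmod k {d} P.

From HB Require Import structures.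
From mathcomp Require Import all_boot all_order all_algebra.
From mathcomp Require Import classical_sets boolp reals constructive_ereal ereal.
From mathcomp Require Import lra.
Import Order.TTheory GRing.Theory Num.Theory.
Local Open Scope classical_set_scope.
Local Open Scope ring_scope.

(* Only TR2 matters: for every e > 0 the translation T e satisfies p << T e p,
   hence also p <= T e p.  Given such a translation, the universal property of
   L_p = lim_{x >> p} M_x produces maps M_p -> L_{T p} (every x >> T p lies
   above p), while the cone maps L_p -> M_{T p} exist because p << T p; the
   interleaving identities then follow from uniqueness in the universal
   property.  The colimit case is dual, and an ephemeral module is
   interleaved with 0 because M(p <= T (T p)) = 0 for p << T (T p).  Being
   e-interleaved for every e > 0 forces d_a = 0. *)

Local Notation pm M h := (@pmor _ _ _ M _ _ h).

Section Waybelow.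
Context {d : Order.disp_t} {P : porderType d}.

Lemma waybelow_le {x y : P} : waybelow x y -> (x <= y)%O.
Proof.
move=> xy.
have dir_y : directed [set y].
  by split=> [|a b -> ->]; [exists y | exists y; rewrite lexx].
have sup_y : is_sup [set y] y by split=> [? ->|u]; [|apply].
by have [z /= <-] := xy [set y] y dir_y sup_y (lexx y).
Qed.

Lemma le_waybelow_trans {a b c : P} : (a <= b)%O -> waybelow b c -> waybelow a c.
Proof.
move=> ab bc D s dirD supD cs; have [z Dz bz] := bc D s dirD supD cs.
by exists z => //; apply: le_trans bz.
Qed.

Lemma waybelow_le_trans {a b c : P} : waybelow a b -> (b <= c)%O -> waybelow a c.
Proof. by move=> ab bc D s dirD supD cs; apply: ab (le_trans bc cs). Qed.

End Waybelow.

Section Linear.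
Context {k : comPzRingType}.

Lemma lin_comp {U V W : lmodType k} {f : V -> W} {g : U -> V} :
  lin f -> lin g -> lin (fun x => f (g x)).
Proof. by move=> lf lg a x y; rewrite lg lf. Qed.

Lemma lin_map0 {U V : lmodType k} {f : U -> V} : lin f -> f 0 = 0.
Proof.
move=> lf; have := lf 1 0 0; rewrite !scale1r addr0 => f0.
by apply: (addrI (f 0)); rewrite addr0 -f0.
Qed.

Lemma lin_cst0 (U V : lmodType k) : lin (fun _ : U => 0 : V).
Proof. by move=> a x y; rewrite scaler0 addr0. Qed.

End Linear.

Section PersistenceModule.
Context {k : comPzRingType} {d : Order.disp_t} {P : porderType d} (M : pmod k P).

Lemma pmor_irrelevance (p q : P) (h h' : (p <= q)%O) x : pm M h x = pm M h' x.
Proof. by rewrite (bool_irrelevance h h'). Qed.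

Lemma pmorK (p q r : P) (h1 : (p <= q)%O) (h2 : (q <= r)%O) (h3 : (p <= r)%O) x :
  pm M h2 (pm M h1 x) = pm M h3 x.
Proof. by rewrite (pmor_comp h1 h2 h3). Qed.

End PersistenceModule.

Section LowerLimit.
Context {k : comPzRingType} {d : Order.disp_t} {P : porderType d} (M L : pmod k P).
Variable pi : forall p x, waybelow p x -> L p -> M x.
Hypothesis HL : is_lower_lim M L pi.

Lemma lower_lim_ext p (N : lmodType k) (v1 v2 : N -> L p) : lin v1 -> lin v2 ->
  (forall x hx n, pi p x hx (v1 n) = pi p x hx (v2 n)) -> v1 =1 v2.
Proof.
move=> l1 l2 e12; case: HL => _ [pi_cone [_ pi_univ]].
have [||u [_ [_ u_uniq]]] := pi_univ p N (fun x hx n => pi p x hx (v1 n)).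
- by move=> x hx; apply: lin_comp; case: HL.
- by move=> *; apply: pi_cone.
by move=> n; rewrite (u_uniq v1) // (u_uniq v2).
Qed.

Lemma lower_lim_factor {p q : P} : (p <= q)%O ->
  {u : M p -> L q | lin u /\
    forall x (hx : waybelow q x) (h : (p <= x)%O) m, pi q x hx (u m) = pm M h m}.
Proof.
move=> pq; apply: cid; case: HL => _ [_ [_ pi_univ]].
pose g x (hx : waybelow q x) := pm M (le_trans pq (waybelow_le hx)).
have [||u [lu [pi_u _]]] := pi_univ q (M p) g.
- by move=> x hx; apply: pmor_lin.
- by move=> *; apply: pmorK.
by exists u; split=> // x hx h m; rewrite pi_u; apply: pmor_irrelevance.
Qed.

Lemma lower_lim_interleaved (Te : P -> P) :
  (forall p, waybelow p (Te p)) -> interleaved Te M L.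
Proof.
move=> Tw; have le_T p : (p <= Te p)%O := waybelow_le (Tw p).
case: HL => pi_lin [pi_cone [pi_nat _]].
pose f p := sval (lower_lim_factor (le_T p)).
have f_lin p : lin (f p) by case: (svalP (lower_lim_factor (le_T p))).
have pi_f p x hx h m : pi (Te p) x hx (f p m) = pm M h m.
  by case: (svalP (lower_lim_factor (le_T p))) => _; apply.
exists f, (fun p => pi p (Te p) (Tw p)); split; [|split; [|split]].
- split=> // p q h h'; apply: lower_lim_ext => [||x hx n].
  + by apply: lin_comp => //; apply: pmor_lin.
  + by apply: lin_comp => //; apply: pmor_lin.
  have qx : (q <= x)%O := le_trans (le_T q) (waybelow_le hx).
  rewrite (pi_f q x hx qx) -(pi_nat _ _ h' x (le_waybelow_trans h' hx) hx).
  by rewrite (pi_f p x _ (le_trans h qx)); apply: pmorK.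
- split=> // p q h h' l /=.
  have pTq := le_waybelow_trans h (Tw q).
  by rewrite -(pi_nat p q h (Te q) pTq (Tw q) l) (pi_cone p (Te p) (Te q) (Tw p) pTq h' l).
- by move=> p h m; rewrite pi_f.
- move=> p h; apply: lower_lim_ext => [||x hx n].
  + by apply: lin_comp.
  + exact: pmor_lin.
  have Tpx : (Te p <= x)%O := le_trans (le_T (Te p)) (waybelow_le hx).
  have px := waybelow_le_trans (Tw p) Tpx.
  by rewrite (pi_f (Te p) x hx Tpx) (pi_cone p (Te p) x (Tw p) px Tpx n) (pi_nat p _ h x px hx n).
Qed.

End LowerLimit.

Section UpperColimit.
Context {k : comPzRingType} {d : Order.disp_t} {P : porderType d} (M L : pmod k P).
Variable iota : forall p x, waybelow x p -> M x -> L p.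
Hypothesis HU : is_upper_colim M L iota.

Lemma upper_colim_ext p (N : lmodType k) (v1 v2 : L p -> N) : lin v1 -> lin v2 ->
  (forall x hx m, v1 (iota p x hx m) = v2 (iota p x hx m)) -> v1 =1 v2.
Proof.
move=> l1 l2 e12; case: HU => _ [iota_cocone [_ iota_univ]].
have [||u [_ [_ u_uniq]]] := iota_univ p N (fun x hx m => v1 (iota p x hx m)).
- by move=> x hx; apply: lin_comp; case: HU.
- by move=> *; rewrite iota_cocone.
by move=> l; rewrite (u_uniq v1) // (u_uniq v2).
Qed.

Lemma upper_colim_factor {p q : P} : (p <= q)%O ->
  {u : L p -> M q | lin u /\
    forall x (hx : waybelow x p) (h : (x <= q)%O) m, u (iota p x hx m) = pm M h m}.
Proof.
move=> pq; apply: cid; case: HU => _ [_ [_ iota_univ]].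
pose g x (hx : waybelow x p) := pm M (le_trans (waybelow_le hx) pq).
have [||u [lu [u_iota _]]] := iota_univ p (M q) g.
- by move=> x hx; apply: pmor_lin.
- by move=> *; apply: pmorK.
by exists u; split=> // x hx h m; rewrite u_iota; apply: pmor_irrelevance.
Qed.

Lemma upper_colim_interleaved (Te : P -> P) :
  (forall p, waybelow p (Te p)) -> interleaved Te M L.
Proof.
move=> Tw; have le_T p : (p <= Te p)%O := waybelow_le (Tw p).
case: HU => iota_lin [iota_cocone [iota_nat _]].
pose g p := sval (upper_colim_factor (le_T p)).
have g_lin p : lin (g p) by case: (svalP (upper_colim_factor (le_T p))).
have g_iota p x hx h m : g p (iota p x hx m) = pm M h m.
  by case: (svalP (upper_colim_factor (le_T p))) => _; apply.
exists (fun p => iota (Te p) p (Tw p)), g; split; [|split; [|split]].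
- split=> // p q h h' m /=.
  have pTq := le_waybelow_trans h (Tw q).
  by rewrite (iota_cocone (Te q) p q pTq (Tw q) h m) (iota_nat (Te p) (Te q) h' p (Tw p) pTq).
- split=> // p q h h'; apply: upper_colim_ext => [||x hx m].
  + by apply: lin_comp => //; apply: pmor_lin.
  + by apply: lin_comp => //; apply: pmor_lin.
  have xTp : (x <= Te p)%O := le_trans (waybelow_le hx) (le_T p).
  rewrite (iota_nat p q h x hx (waybelow_le_trans hx h) m).
  by rewrite (g_iota q x _ (le_trans xTp h')) (g_iota p x hx xTp); apply/esym/pmorK.
- by move=> p h m /=; rewrite g_iota.
- move=> p h; apply: upper_colim_ext => [||x hx m].
  + by apply: lin_comp.
  + exact: pmor_lin.
  have xTp : (x <= Te p)%O := le_trans (waybelow_le hx) (le_T p).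
  have xTTp := le_waybelow_trans xTp (Tw (Te p)).
  rewrite (g_iota p x hx xTp) (iota_cocone _ x (Te p) xTTp (Tw (Te p)) xTp m).
  by rewrite (iota_nat p _ h x hx xTTp m).
Qed.

End UpperColimit.

Lemma ephemeral_interleaved0 {k : comPzRingType} {d : Order.disp_t}
  {P : porderType d} (Te : P -> P) (M : pmod k P) :
  (forall p, waybelow p (Te p)) -> ephemeral M -> interleaved Te M (zero_pmod k P).
Proof.
move=> Tw M_eph; exists (fun _ _ => 0), (fun _ _ => 0); split; [|split; [|split]].
- by split=> // *; apply: lin_cst0.
- split=> [p|p q h h' x]; first exact: lin_cst0.
  by rewrite (lin_map0 (pmor_lin _)).
- move=> p h x; rewrite M_eph //.
  exact: waybelow_le_trans (Tw p) (waybelow_le (Tw (Te p))).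
- by move=> p h x /=; apply/rowP => -[].
Qed.

Lemma d_a_eq0 (R : realType) {k : comPzRingType} {d : Order.disp_t}
  {P : porderType d} (T : R -> P -> P) (M N : pmod k P) :
  (forall e : R, 0 < e -> interleaved (T e) M N) -> d_a T M N = 0%E.
Proof.
move=> MN; rewrite /d_a; set i := ereal_inf _.
have i_le e : 0 < e -> (i <= e%:E)%E.
  by move=> e0; apply: ge_ereal_inf; exists e%:E => //; exists e => //; split;
    [exact: ltW | exact: MN].
have i_ge0 : (0 <= i)%E.
  by apply: le_ereal_inf_tmp => _ [e [e0 _] <-]; rewrite lee_fin.
move: i_le i_ge0; case: i => [r| |] i_le i_ge0 //.
- rewrite lee_fin in i_ge0; congr (_%:E); apply/eqP; rewrite eq_le i_ge0 andbT.
  rewrite leNgt; apply/negP => r0.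
  by have := i_le (r / 2); rewrite lee_fin => /(_ _); lra.
- by have := i_le 1 ltr01.
Qed.

Theorem mainTheorem18 (R : realType) (d : Order.disp_t) (P : porderType d)
    (T : R -> P -> P) (k : comPzRingType) :
  continuous_poset P ->
  (forall e : R, 0 <= e -> translation (T e) /\ scott_continuous (T e)) ->
  superlinear T -> TR2 T ->
  (forall (M L : pmod k P) (pi : forall p x, waybelow p x -> L p -> M x),
      is_lower_lim M L pi -> d_a T M L = 0%E) /\
  (forall (M L : pmod k P) (iota : forall p x, waybelow x p -> M x -> L p),
      is_upper_colim M L iota -> d_a T M L = 0%E) /\
  (forall M : pmod k P, ephemeral M -> d_a T M (zero_pmod k P) = 0%E).
Proof.
move=> _ _ _ tr2.
have Tw e : 0 < e -> forall p, waybelow p (T e p) by move=> e0 p; apply: tr2.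
split; [|split].
- move=> M L pi HL; apply: d_a_eq0 => e e0.
  exact: lower_lim_interleaved HL _ (Tw e e0).
- move=> M L iota HU; apply: d_a_eq0 => e e0.
  exact: upper_colim_interleaved HU _ (Tw e e0).
- move=> M M_eph; apply: d_a_eq0 => e e0.
  exact: ephemeral_interleaved0 (Tw e e0) M_eph.
Qed.
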